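(* Let $n\ge0$ and let $\mathfrak g_1,\mathfrak g_2$ be Leibniz algebras. Then $\mathfrak g_1\sim_n\mathfrak g_2$ if and only if there exist a Leibniz algebra $\mathfrak h$ with $\mathfrak h\sim_n\mathfrak g_1$ and a surjective Leibniz algebra homomorphism $\theta:\mathfrak h\to\mathfrak g_2$ such that $\operatorname{Ker}(\theta)\cap\gamma_{n+1}^{\mathsf{Lie}}(\mathfrak h)=0$.
   Context: All Leibniz algebras are over a field $\mathbb{K}$ with $\frac12\in\mathbb{K}$. A Leibniz algebra is a vector space $\mathfrak g$ with a bilinear bracket $[-,-]$ satisfying $[x,[y,z]]=[[x,y],z]-[[x,z],y]$. For $x,y\in\mathfrak g$ put $[x,y]_{lie}=[x,y]+[y,x]$. For two-sided ideals $\mathfrak m,\mathfrak n$ of $\mathfrak g$, $[\mathfrak m,\mathfrak n]_{\mathsf{Lie}}$ denotes the two-sided ideal of $\mathfrak g$ generated by $\{[m,x]_{lie}: m\in\mathfrak m, x\in\mathfrak n\}$. Lower Lie-central series: $\gamma_1^{\mathsf{Lie}}(\mathfrak g)=\mathfrak g$, $\gamma_i^{\mathsf{Lie}}(\mathfrak g)=[\gamma_{i-1}^{\mathsf{Lie}}(\mathfrak g),\mathfrak g]_{\mathsf{Lie}}$ for $i\ge2$. Upper Lie-central series: $\mathcal Z_0^{\mathsf{Lie}}(\mathfrak g)=0$, $\mathcal Z_i^{\mathsf{Lie}}(\mathfrak g)=\{x\in\mathfrak g:[x,y]_{lie}\in\mathcal Z_{i-1}^{\mathsf{Lie}}(\mathfrak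 g)\ \text{for all } y\in\mathfrak g\}$ for $i\ge1$. For $n\ge0$, Leibniz algebras $\mathfrak g_1,\mathfrak g_2$ are $n$-Lie-isoclinic, written $\mathfrak g_1\sim_n\mathfrak g_2$, if there exist Leibniz algebra isomorphisms $\eta:\mathfrak g_1/\mathcal Z_n^{\mathsf{Lie}}(\mathfrak g_1)\to\mathfrak g_2/\mathcal Z_n^{\mathsf{Lie}}(\mathfrak g_2)$ and $\xi:\gamma_{n+1}^{\mathsf{Lie}}(\mathfrak g_1)\to\gamma_{n+1}^{\mathsf{Lie}}(\mathfrak g_2)$ such that $\xi([\cdots[[x_1,x_2]_{lie},x_3]_{lie},\ldots,x_{n+1}]_{lie})=[\cdots[[y_1,y_2]_{lie},y_3]_{lie},\ldots,y_{n+1}]_{lie}$ whenever $x_i\in\mathfrak g_1$, $y_i\in\mathfrak g_2$ satisfy $\eta(x_i+\mathcal Z_n^{\mathsf{Lie}}(\mathfrak g_1))=y_i+\mathcal Z_n^{\mathsf{Lie}}(\mathfrak g_2)$ for $i=1,\ldots,n+1$. *)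

From HB Require Import structures.
From mathcomp Require Import all_boot all_order all_algebra.
Set Implicit Arguments. Unset Strict Implicit. Unset Printing Implicit Defensive.
Import GRing.Theory.
Local Open Scope ring_scope.

Record leibniz (K : fieldType) := Leibniz {
  lcar :> lmodType K;
  lbr : lcar -> lcar -> lcar;
  lbr_linl : forall (a : K) (x y z : lcar), lbr (a *: x + y) z = a *: lbr x z + lbr y z;
  lbr_linr : forall (a : K) (x y z : lcar), lbr z (a *: x + y) = a *: lbr z x + lbr z y;
  lbr_leibniz : forall x y z : lcar, lbr x (lbr y z) = lbr (lbr x y) z - lbr (lbr x z) y
}.

Section Leib.
Variables (K : fieldType) (g : leibniz K).

Definition liebr (x y : g) : g := lbr x y + lbr y x.

Definition is_subspace (P : g -> Prop) : Prop :=
  P 0 /\ forall (a : K) (x y : g), P x -> P y -> P (a *: x + y).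

Definition is_ideal (P : g -> Prop) : Prop :=
  is_subspace P /\ forall x y : g, P x -> P (lbr x y) /\ P (lbr y x).

Definition gen_ideal (S : g -> Prop) : g -> Prop :=
  fun x => forall I : g -> Prop, is_ideal I -> (forall y, S y -> I y) -> I x.

Definition lie_comm (M N : g -> Prop) : g -> Prop :=
  gen_ideal (fun z => exists m x, M m /\ N x /\ z = liebr m x).

(* lower Lie-central series, indexed as in the paper: gammaLie 1 = g,
   gammaLie i = [gammaLie (i-1), g]_Lie for i >= 2  (gammaLie 0 := g, unused) *)
Fixpoint gammaLie (i : nat) : g -> Prop :=
  match i with
  | 0 => fun _ => True
  | S i' => match i' with
            | 0 => fun _ => True
            | S _ => lie_comm (gammaLie i') (fun _ => True)
            end
  end.

Fixpoint ZLie (i : nat) : g -> Prop :=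
  match i with
  | 0 => fun x => x = 0
  | S i' => fun x => forall y : g, ZLie i' (liebr x y)
  end.

Fixpoint lie_iter (xs : nat -> g) (k : nat) : g :=
  match k with
  | 0 => xs 0%N
  | S k' => liebr (lie_iter xs k') (xs k)
  end.

Definition coset (P : g -> Prop) (x : g) : g -> Prop := fun y => P (y - x).
Definition quot (P : g -> Prop) : Type := {S : g -> Prop | exists x, S = coset P x}.
Definition cls (P : g -> Prop) (x : g) : quot P :=
  exist _ (coset P x) (ex_intro _ x erefl).
End Leib.

Arguments cls {K g} P x.
Arguments ZLie {K} g i _.
Arguments gammaLie {K} g i _.

Definition leib_hom (K : fieldType) (g h : leibniz K) (f : g -> h) : Prop :=
  (forall (a : K) (x y : g), f (a *: x + y) = a *: f x + f y) /\
  (forall x y : g, f (lbr x y) = lbr (f x) (f y)).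

(* A Leibniz algebra isomorphism eta : g1/P1 -> g2/P2, where the quotient
   operations are those induced on cosets by representatives. *)
Definition quot_iso (K : fieldType) (g1 g2 : leibniz K)
  (P1 : g1 -> Prop) (P2 : g2 -> Prop) (eta : quot P1 -> quot P2) : Prop :=
  bijective eta /\
  forall (a : K) (x y : g1) (u v : g2),
    eta (cls P1 x) = cls P2 u -> eta (cls P1 y) = cls P2 v ->
    eta (cls P1 (a *: x + y)) = cls P2 (a *: u + v) /\
    eta (cls P1 (lbr x y)) = cls P2 (lbr u v).

(* A Leibniz algebra isomorphism xi : A1 -> A2 between subalgebras A1, A2
   (given as predicates); xi is a function g1 -> g2 whose values off A1 are
   irrelevant. *)
Definition sub_iso (K : fieldType) (g1 g2 : leibniz K)
  (A1 : g1 -> Prop) (A2 : g2 -> Prop) (xi : g1 -> g2) : Prop :=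
  (forall x, A1 x -> A2 (xi x)) /\
  (forall x y, A1 x -> A1 y -> xi x = xi y -> x = y) /\
  (forall y, A2 y -> exists2 x, A1 x & xi x = y) /\
  (forall (a : K) x y, A1 x -> A1 y -> xi (a *: x + y) = a *: xi x + xi y) /\
  (forall x y, A1 x -> A1 y -> xi (lbr x y) = lbr (xi x) (xi y)).

Definition lie_isoclinic (K : fieldType) (n : nat) (g1 g2 : leibniz K) : Prop :=
  exists (eta : quot (ZLie g1 n) -> quot (ZLie g2 n)) (xi : g1 -> g2),
    quot_iso eta /\ sub_iso (gammaLie g1 n.+1) (gammaLie g2 n.+1) xi /\
    forall (xs : nat -> g1) (ys : nat -> g2),
      (forall i, (i <= n)%N -> eta (cls (ZLie g1 n) (xs i)) = cls (ZLie g2 n) (ys i)) ->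
      xi (lie_iter xs n) = lie_iter ys n.

From HB Require Import structures.
From mathcomp Require Import all_boot all_order all_algebra.
From Stdlib Require Import ClassicalEpsilon ProofIrrelevance FunctionalExtensionality PropExtensionality.
Import GRing.Theory.
Local Open Scope ring_scope.
Set Implicit Arguments. Unset Strict Implicit. Unset Printing Implicit Defensive.

(* n-Lie-isoclinism is symmetric, so for "->" one takes h := g2 and theta := id.
   For "<-", a surjective homomorphism theta : h -> g2 whose kernel meets
   gamma_{n+1}(h) trivially behaves like an n-Lie-isoclinism: it maps Z_n(h)
   onto Z_n(g2), and conversely theta z in Z_n(g2) forces every n-fold Lie
   bracket starting at z into Ker(theta) /\ gamma_{n+1}(h) = 0, so z in Z_n(h).
   Hence theta induces a bijection h/Z_n(h) -> g2/Z_n(g2) and restricts to an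
   isomorphism gamma_{n+1}(h) -> gamma_{n+1}(g2); composing with g1 ~ h gives
   g1 ~ g2. *)

Lemma injective_surjective_bij (A B : Type) (a0 : A) (f : A -> B) :
  injective f -> (forall y, exists x, f x = y) -> bijective f.
Proof.
move=> f_inj f_surj; pose f_inv y := epsilon (inhabits a0) (fun x => f x = y).
have f_invK y : f (f_inv y) = y := epsilon_spec _ _ (f_surj y).
by exists f_inv => [x|y]; [apply: f_inj; rewrite f_invK | exact: f_invK].
Qed.

Section LeibnizAlgebra.
Variables (K : fieldType) (g : leibniz K).
Implicit Types (x y z : g) (P : g -> Prop).

Lemma lbr0l z : lbr 0 z = 0 :> g.
Proof. by have := lbr_linl (-1) (0 : g) 0 z; rewrite scaler0 addr0 scaleN1r addNr. Qed.

Lemma lbr0r z : lbr z 0 = 0 :> g.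
Proof. by have := lbr_linr (-1) (0 : g) 0 z; rewrite scaler0 addr0 scaleN1r addNr. Qed.

Lemma liebr_linl (a : K) x y z : liebr (a *: x + y) z = a *: liebr x z + liebr y z.
Proof.
rewrite /liebr lbr_linl lbr_linr scalerDr -!addrA; congr (_ + _).
by rewrite addrCA.
Qed.

Lemma liebr0l z : liebr 0 z = 0.
Proof. by rewrite /liebr lbr0l lbr0r addr0. Qed.

Section Subspace.
Variable P : g -> Prop.
Hypothesis P_sub : is_subspace P.

Lemma subspace0 : P 0. Proof. by case: P_sub. Qed.

Lemma subspaceL a x y : P x -> P y -> P (a *: x + y).
Proof. by case: P_sub => _; apply. Qed.

Lemma subspaceD x y : P x -> P y -> P (x + y).
Proof. by move=> Px Py; have := subspaceL 1 Px Py; rewrite scale1r. Qed.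

Lemma subspaceB x y : P x -> P y -> P (x - y).
Proof.
move=> Px Py; apply: subspaceD Px _.
by have := subspaceL (-1) Py subspace0; rewrite addr0 scaleN1r.
Qed.

Lemma quot_val_inj (q1 q2 : quot P) : proj1_sig q1 = proj1_sig q2 -> q1 = q2.
Proof.
case: q1 q2 => [S1 p1] [S2 p2] /= eqS; subst S2.
by rewrite (proof_irrelevance _ p1 p2).
Qed.

Lemma eq_clsP x y : cls P x = cls P y <-> P (x - y).
Proof.
split=> [eq_xy | Pxy].
  have : proj1_sig (cls P x) x by rewrite /= /coset subrr; exact: subspace0.
  by rewrite eq_xy.
apply: quot_val_inj; apply: functional_extensionality => z /=.
apply: propositional_extensionality; rewrite /coset; split=> Pz.
  by rewrite -(subrKA x); apply: subspaceD.
by rewrite -(subrKA y) -(opprB x); apply: subspaceB.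
Qed.

Lemma quot_clsP (q : quot P) : exists x, q = cls P x.
Proof. by case: q => S [x eqS]; exists x; apply: quot_val_inj. Qed.

End Subspace.

Definition quot_repr P (q : quot P) : g :=
  epsilon (inhabits 0) (fun x => q = cls P x).

Lemma quot_reprK P (q : quot P) : cls P (quot_repr q) = q.
Proof. exact/esym/(epsilon_spec _ _ (quot_clsP q)). Qed.

Lemma ZLie_subspace i : is_subspace (ZLie g i).
Proof.
elim: i => [|i IH] /=.
  by split=> // a x y -> ->; rewrite scaler0 addr0.
split=> [y|a x y Zx Zy w]; first by rewrite liebr0l; exact: subspace0.
by rewrite liebr_linl; exact: subspaceL.
Qed.

Definition lie_shift (xs : nat -> g) : nat -> g :=
  fun k => if k is k'.+1 then xs k'.+2 else liebr (xs 0%N) (xs 1%N).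

Lemma lie_iter_shift xs i : lie_iter xs i.+1 = lie_iter (lie_shift xs) i.
Proof.
elim: i => [|i IH] //.
by transitivity (liebr (lie_iter xs i.+1) (xs i.+2)); rewrite // IH.
Qed.

Lemma ZLieP i x : ZLie g i x <-> forall xs, xs 0%N = x -> lie_iter xs i = 0.
Proof.
elim: i x => [|i IH] x.
  by split=> [-> xs /= ->|iter0]; last exact: (iter0 (fun=> x)).
split=> [Zx xs xs0|iter0 y].
  rewrite lie_iter_shift; apply: (IH _).1 (Zx (xs 1%N)) _ _.
  by rewrite /= xs0.
apply/IH => ys ys0.
pose xs k := match k with 0 => x | 1 => y | k'.+2 => ys k'.+1 end.
have -> : ys = lie_shift xs.
  by apply: functional_extensionality => -[|k] //=; rewrite ys0.
by rewrite -lie_iter_shift; apply: iter0.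
Qed.

Lemma gen_ideal_is_ideal (S : g -> Prop) : is_ideal (gen_ideal S).
Proof.
split; [split|].
- by move=> I [[I0 _] _].
- by move=> a x y Sx Sy I I_ideal SI; apply: (subspaceL I_ideal.1); [apply: Sx | apply: Sy].
- by move=> x y Sx; split=> I I_ideal SI; have [] := I_ideal.2 _ y (Sx I I_ideal SI).
Qed.

Lemma gammaLie_ideal i : is_ideal (gammaLie g i).
Proof. by case: i => [|[|i]] /=; [repeat split.. | exact: gen_ideal_is_ideal]. Qed.

Lemma gammaLie_subspace i : is_subspace (gammaLie g i).
Proof. exact: (gammaLie_ideal i).1. Qed.

Lemma lie_iter_gammaLie xs i : gammaLie g i.+1 (lie_iter xs i).
Proof.
elim: i => [|i IH] // I _ SI.
by apply: SI; exists (lie_iter xs i), (xs i.+1).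
Qed.

End LeibnizAlgebra.

Section Homomorphism.
Variables (K : fieldType) (h g : leibniz K) (theta : h -> g).
Hypothesis theta_hom : leib_hom theta.

Lemma leib_homL a (x y : h) : theta (a *: x + y) = a *: theta x + theta y.
Proof. exact: theta_hom.1. Qed.

Lemma leib_hom_lbr (x y : h) : theta (lbr x y) = lbr (theta x) (theta y).
Proof. exact: theta_hom.2. Qed.

Lemma leib_hom0 : theta 0 = 0.
Proof. by have := leib_homL (-1) 0 0; rewrite scaler0 addr0 scaleN1r addNr. Qed.

Lemma leib_homB (x y : h) : theta (x - y) = theta x - theta y.
Proof. by have := leib_homL (-1) y x; rewrite !scaleN1r !(addrC (- _)). Qed.

Lemma leib_hom_liebr (x y : h) : theta (liebr x y) = liebr (theta x) (theta y).
Proof.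
by have := leib_homL 1 (lbr x y) (lbr y x); rewrite !scale1r !leib_hom_lbr.
Qed.

Lemma leib_hom_lie_iter xs i :
  theta (lie_iter xs i) = lie_iter (fun k => theta (xs k)) i.
Proof. by elim: i => [|i IH] //=; rewrite leib_hom_liebr IH. Qed.

Lemma leib_hom_gammaLie i x : gammaLie h i.+1 x -> gammaLie g i.+1 (theta x).
Proof.
elim: i x => [|i IH] x // gx I I_ideal SI.
apply: (gx (fun z => I (theta z))).
  split; [split|].
  - by rewrite leib_hom0; exact: (subspace0 I_ideal.1).
  - by move=> a u v Iu Iv; rewrite leib_homL; exact: (subspaceL I_ideal.1).
  - by move=> u v Iu; rewrite !leib_hom_lbr; exact: I_ideal.2.
move=> _ [m [y [gm [_ ->]]]]; rewrite leib_hom_liebr; apply: SI.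
by exists (theta m), (theta y); split; first exact: IH.
Qed.

Hypothesis theta_surj : forall y, exists x, theta x = y.

Lemma gammaLie_surj i y :
  gammaLie g i.+1 y -> exists2 x, gammaLie h i.+1 x & theta x = y.
Proof.
elim: i y => [|i IH] y gy; first by case: (theta_surj y) => x <-; exists x.
apply: (gy (fun y => exists2 x, gammaLie h i.+2 x & theta x = y)).
  have [gh_sub gh_br] := gammaLie_ideal h i.+2.
  split; [split|].
  - by exists 0; [exact: (subspace0 gh_sub) | exact: leib_hom0].
  - move=> a _ _ [u gu <-] [v gv <-].
    by exists (a *: u + v); [exact: (subspaceL gh_sub) | exact: leib_homL].
  - move=> _ w [u gu <-]; case: (theta_surj w) => v <-.
    have [guv gvu] := gh_br u v gu.
    by split; [exists (lbr u v) | exists (lbr v u)]; rewrite // leib_hom_lbr.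
move=> _ [m [w [gm [_ ->]]]].
case: (IH m gm) => m' gm' <-; case: (theta_surj w) => w' <-.
exists (liebr m' w'); last exact: leib_hom_liebr.
by move=> I _ SI; apply: SI; exists m', w'.
Qed.

Lemma leib_hom_ZLie i z : ZLie h i z -> ZLie g i (theta z).
Proof.
elim: i z => [|i IH] z /=; first by move=> ->; exact: leib_hom0.
by move=> Zz y; case: (theta_surj y) => w <-; rewrite -leib_hom_liebr; exact: IH.
Qed.

End Homomorphism.

Lemma leib_hom_ZLie_rev (K : fieldType) (h g : leibniz K) (theta : h -> g) n :
  leib_hom theta -> (forall x, theta x = 0 -> gammaLie h n.+1 x -> x = 0) ->
  forall z, ZLie g n (theta z) -> ZLie h n z.
Proof.
move=> theta_hom ker_gamma z /ZLieP Zz; apply/ZLieP => xs xs0.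
apply: ker_gamma; last exact: lie_iter_gammaLie.
by rewrite (leib_hom_lie_iter theta_hom); apply: Zz; rewrite /= xs0.
Qed.

Section Isomorphisms.
Variable K : fieldType.

Lemma quot_iso_sym (g1 g2 : leibniz K) (P1 : g1 -> Prop) (P2 : g2 -> Prop)
    (eta : quot P1 -> quot P2) (eta_inv : quot P2 -> quot P1) :
  quot_iso eta -> cancel eta eta_inv -> cancel eta_inv eta -> quot_iso eta_inv.
Proof.
move=> [_ eta_op] etaK eta_invK; split; first by exists eta.
move=> a x y u v eta_inv_x eta_inv_y.
have [<- <-] := eta_op a u v x y
  (esym (canRL eta_invK eta_inv_x)) (esym (canRL eta_invK eta_inv_y)).
by rewrite !etaK.
Qed.

Section SubIso.
Variables (g1 g2 : leibniz K) (A1 : g1 -> Prop) (A2 : g2 -> Prop).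
Hypotheses (A1_ideal : is_ideal A1) (A2_ideal : is_ideal A2).

Lemma sub_iso_sym (xi : g1 -> g2) :
  sub_iso A1 A2 xi ->
  exists2 xi_inv : g2 -> g1, sub_iso A2 A1 xi_inv &
    forall x, A1 x -> xi_inv (xi x) = x.
Proof.
move=> [xi_in [xi_inj [xi_surj [xi_lin xi_br]]]].
pose xi_inv y := epsilon (inhabits 0) (fun x => A1 x /\ xi x = y).
have xi_invK y : A2 y -> A1 (xi_inv y) /\ xi (xi_inv y) = y.
  move=> A2y; apply: (epsilon_spec (inhabits 0) (fun x => A1 x /\ xi x = y)).
  by have [x A1x <-] := xi_surj y A2y; exists x.
have xi_invE y x : A2 y -> A1 x -> xi x = y -> xi_inv y = x.
  by move=> A2y A1x xi_x; have [? eq_y] := xi_invK y A2y; apply: xi_inj; rewrite ?eq_y.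
exists xi_inv; last by move=> x A1x; apply: xi_invE => //; exact: xi_in.
split; [|split; [|split; [|split]]].
- by move=> y /xi_invK[].
- move=> y1 y2 /xi_invK[_ xi_y1] /xi_invK[_ xi_y2] eq_y.
  by rewrite -xi_y1 -xi_y2 eq_y.
- by move=> x A1x; exists (xi x); [exact: xi_in | exact: xi_invE (xi_in x A1x) _ _].
- move=> a y1 y2 A2y1 A2y2.
  have [[A1x1 xi_x1] [A1x2 xi_x2]] := (xi_invK _ A2y1, xi_invK _ A2y2).
  apply: xi_invE; first exact: (subspaceL A2_ideal.1).
    exact: (subspaceL A1_ideal.1).
  by rewrite xi_lin // xi_x1 xi_x2.
- move=> y1 y2 A2y1 A2y2.
  have [[A1x1 xi_x1] [A1x2 xi_x2]] := (xi_invK _ A2y1, xi_invK _ A2y2).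
  apply: xi_invE; first exact: (A2_ideal.2 _ _ A2y1).1.
    exact: (A1_ideal.2 _ _ A1x1).1.
  by rewrite xi_br // xi_x1 xi_x2.
Qed.

End SubIso.

Lemma sub_iso_comp (g1 g2 g3 : leibniz K)
    (A1 : g1 -> Prop) (A2 : g2 -> Prop) (A3 : g3 -> Prop)
    (xi : g1 -> g2) (xi' : g2 -> g3) :
  sub_iso A1 A2 xi -> sub_iso A2 A3 xi' -> sub_iso A1 A3 (xi' \o xi).
Proof.
move=> [xi_in [xi_inj [xi_surj [xi_lin xi_br]]]].
move=> [xi'_in [xi'_inj [xi'_surj [xi'_lin xi'_br]]]].
split; [|split; [|split; [|split]]] => /=.
- by move=> x /xi_in/xi'_in.
- by move=> x y A1x A1y /xi'_inj eq_xi; apply: xi_inj; rewrite // eq_xi //; exact: xi_in.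
- move=> z /xi'_surj[y /xi_surj[x A1x <-] <-]; by exists x.
- by move=> a x y A1x A1y; rewrite xi_lin // xi'_lin //; exact: xi_in.
- by move=> x y A1x A1y; rewrite xi_br // xi'_br //; exact: xi_in.
Qed.

End Isomorphisms.

Section SurjectiveHomomorphism.
Variables (K : fieldType) (n : nat) (h g : leibniz K) (theta : h -> g).
Hypotheses (theta_hom : leib_hom theta) (theta_surj : forall y, exists x, theta x = y).
Hypothesis theta_ker : forall x, theta x = 0 -> gammaLie h n.+1 x -> x = 0.

Definition quot_map (q : quot (ZLie h n)) : quot (ZLie g n) :=
  cls (ZLie g n) (theta (quot_repr q)).

Lemma quot_map_cls z : quot_map (cls (ZLie h n) z) = cls (ZLie g n) (theta z).
Proof.
apply/(eq_clsP (ZLie_subspace g n)); rewrite -(leib_homB theta_hom).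
apply: (leib_hom_ZLie theta_hom theta_surj).
by apply/(eq_clsP (ZLie_subspace h n)); rewrite quot_reprK.
Qed.

Lemma quot_map_inj : injective quot_map.
Proof.
move=> q1 q2; rewrite -(quot_reprK q1) -(quot_reprK q2) !quot_map_cls.
move/(eq_clsP (ZLie_subspace g n)); rewrite -(leib_homB theta_hom) => Ztheta.
exact/(eq_clsP (ZLie_subspace h n))/(leib_hom_ZLie_rev theta_hom theta_ker).
Qed.

Lemma quot_map_bij : bijective quot_map.
Proof.
apply: (injective_surjective_bij (cls _ 0) quot_map_inj) => q.
have [y ->] := quot_clsP q; have [x <-] := theta_surj y.
by exists (cls _ x); exact: quot_map_cls.
Qed.

(* [Z_n(h)] is not shown to be an ideal here, so [quot_map] is proved to respect
   the operations only after an [eta] that supplies representatives. *)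
Lemma quot_iso_quot_map_comp (g1 : leibniz K) (P1 : g1 -> Prop)
    (eta : quot P1 -> quot (ZLie h n)) :
  quot_iso eta -> quot_iso (quot_map \o eta).
Proof.
move=> [eta_bij eta_op]; split; first exact: bij_comp quot_map_bij eta_bij.
move=> a x y u v /=; have [[w <-] [w' <-]] := (theta_surj u, theta_surj v).
rewrite -!quot_map_cls => /quot_map_inj eta_x /quot_map_inj eta_y.
have [-> ->] := eta_op a x y w w' eta_x eta_y.
by rewrite !quot_map_cls (leib_homL theta_hom) (leib_hom_lbr theta_hom).
Qed.

Lemma sub_iso_gammaLie : sub_iso (gammaLie h n.+1) (gammaLie g n.+1) theta.
Proof.
split; [|split; [|split; [|split]]].
- exact: leib_hom_gammaLie.
- move=> x y gx gy eq_theta; apply/eqP; rewrite -subr_eq0; apply/eqP.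
  apply: theta_ker; first by rewrite (leib_homB theta_hom) eq_theta subrr.
  exact: (subspaceB (gammaLie_subspace h n.+1)).
- exact: gammaLie_surj.
- by move=> a x y _ _; exact: leib_homL.
- by move=> x y _ _; exact: leib_hom_lbr.
Qed.

End SurjectiveHomomorphism.

Section Isoclinism.
Variables (K : fieldType) (n : nat).

Lemma lie_isoclinic_sym (g1 g2 : leibniz K) :
  lie_isoclinic n g1 g2 -> lie_isoclinic n g2 g1.
Proof.
move=> [eta [xi [eta_iso [xi_iso eta_xi]]]].
have [eta_inv etaK eta_invK] := eta_iso.1.
have [xi_inv xi_inv_iso xiK] :=
  sub_iso_sym (gammaLie_ideal g1 n.+1) (gammaLie_ideal g2 n.+1) xi_iso.
exists eta_inv, xi_inv; split; first exact: quot_iso_sym eta_iso etaK eta_invK.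
split=> // ys xs eta_inv_ys.
rewrite -(eta_xi xs ys) ?xiK //; first exact: lie_iter_gammaLie.
by move=> i le_in; rewrite -eta_inv_ys.
Qed.

Lemma lie_isoclinic_surj_hom (g1 h g2 : leibniz K) (theta : h -> g2) :
  leib_hom theta -> (forall y, exists x, theta x = y) ->
  (forall x, theta x = 0 -> gammaLie h n.+1 x -> x = 0) ->
  lie_isoclinic n g1 h -> lie_isoclinic n g1 g2.
Proof.
move=> theta_hom theta_surj theta_ker [eta [xi [eta_iso [xi_iso eta_xi]]]].
exists (quot_map theta \o eta), (theta \o xi); split.
  exact: quot_iso_quot_map_comp.
split; first exact: sub_iso_comp xi_iso (sub_iso_gammaLie _ _ _).
move=> xs ys /= eta_xs_ys.
have [zs theta_zs] : exists zs : nat -> h, forall i, theta (zs i) = ys i.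
  by exists (fun i => epsilon (inhabits 0) (fun z => theta z = ys i)) => i;
    exact: (epsilon_spec _ _ (theta_surj (ys i))).
rewrite (eta_xi xs zs) ?(leib_hom_lie_iter theta_hom).
  by congr (lie_iter _ n); apply: functional_extensionality.
move=> i le_in; apply: (quot_map_inj theta_hom theta_surj theta_ker).
by rewrite (quot_map_cls _ theta_hom theta_surj) theta_zs; exact: eta_xs_ys.
Qed.

End Isoclinism.

Theorem mainTheorem9 (K : fieldType) (h2 : (2 : K) != 0) (n : nat)
  (g1 g2 : leibniz K) :
  lie_isoclinic n g1 g2 <->
  exists (h : leibniz K) (theta : h -> g2),
    lie_isoclinic n h g1 /\ leib_hom theta /\
    (forall y : g2, exists x : h, theta x = y) /\
    (forall x : h, theta x = 0 -> gammaLie h n.+1 x -> x = 0).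
Proof.
split=> [g1_g2 | [h [theta [h_g1 [theta_hom [theta_surj theta_ker]]]]]].
  exists g2, id; split; first exact: lie_isoclinic_sym.
  by split; [split | split=> [y|]; first exists y].
exact: lie_isoclinic_surj_hom theta_hom theta_surj theta_ker (lie_isoclinic_sym h_g1).
Qed.
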